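(* Let $G=(V,E)$ be a connected undirected graph (parallel edges allowed) with reactances $r_e>0$ and admittance matrix $\mathbf{A}$, let $\vec{\theta}\in\mathbb{R}^V$ and $\vec{p}=\mathbf{A}\vec{\theta}$. Let $H=(V_H,E_H)$ be a subgraph of $G$, let $F\subseteq E_H$, let $\mathbf{A}'$ be the admittance matrix of $G'=(V,E\setminus F)$ (assumed connected), and let $\vec{\theta}'\in\mathbb{R}^V$ satisfy $\mathbf{A}'\vec{\theta}'=\vec{p}$. Suppose a data distortion attack: the observed vector $\vec{\theta}^{\star}\in\mathbb{R}^V$ satisfies $\theta^{\star}_v=\theta'_v$ for $v\in V\setminus V_H$ and $\vec{\theta}^{\star}_H=\vec{\theta}'_H+\vec{z}$, where $\vec{z}$ is a random vector in $\mathbb{R}^{V_H}$ whose distribution has no positive probability mass on any proper linear subspace. Then for every $i\in\mathrm{int}(\bar H)$, $\mathbf{A}_i\vec{\theta}^{\star}=p_i$.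
   Context: Admittance matrix: for $u\neq v$, $a_{uv}=-\sum_e 1/r_e$ over edges $e$ joining $u,v$ ($0$ if none), $a_{uu}=-\sum_{w\neq u}a_{uw}$; $\mathbf{A}_i$ is the $i$-th row. $\bar H$ denotes the subgraph of $G$ induced by $V\setminus V_H$; $\vec{\theta}_H$ denotes the restriction of $\vec{\theta}$ to $V_H$. For a subgraph $S$ of $G$ with node set $V_S$, $\mathrm{int}(S)=\{i\in V_S: N(i)\subseteq V_S\}$, where $N(i)$ is the set of neighbors of $i$ in $G$. *)

From HB Require Import structures.
From mathcomp Require Import all_boot all_order all_algebra.
From mathcomp Require Import all_classical all_reals all_analysis.
Set Implicit Arguments. Unset Strict Implicit. Unset Printing Implicit Defensive.
Import Order.TTheory GRing.Theory Num.Theory.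
Local Open Scope ring_scope.

(* A multigraph on vertices 'I_n with edges 'I_m; edge e joins (ends e).1 and
   (ends e).2 (undirected; parallel edges allowed). *)

Definition joins (n m : nat) (ends : 'I_m -> 'I_n * 'I_n) (e : 'I_m) (u v : 'I_n) : bool :=
  (ends e == (u, v)) || (ends e == (v, u)).

Definition adj_in (n m : nat) (ends : 'I_m -> 'I_n * 'I_n) (S : {set 'I_m}) : rel 'I_n :=
  fun u v => [exists e in S, joins ends e u v].

Definition connected_in (n m : nat) (ends : 'I_m -> 'I_n * 'I_n) (S : {set 'I_m}) : Prop :=
  forall u v : 'I_n, connect (adj_in ends S) u v.

Definition offdiag_adm (R : fieldType) (n m : nat) (ends : 'I_m -> 'I_n * 'I_n)
  (r : 'I_m -> R) (S : {set 'I_m}) (u v : 'I_n) : R :=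
  - \sum_(e in S | joins ends e u v) (r e)^-1.

Definition admittance (R : fieldType) (n m : nat) (ends : 'I_m -> 'I_n * 'I_n)
  (r : 'I_m -> R) (S : {set 'I_m}) : 'M[R]_n :=
  \matrix_(u, v) if u == v then - \sum_(w | w != u) offdiag_adm ends r S u w
                 else offdiag_adm ends r S u v.

Definition neighb (n m : nat) (ends : 'I_m -> 'I_n * 'I_n) (S : {set 'I_m}) (i : 'I_n) : {set 'I_n} :=
  [set j | adj_in ends S i j].

(* int of the subgraph induced by the complement of VH: nodes i outside VH
   all of whose G-neighbours are outside VH. *)
Definition int_compl (n m : nat) (ends : 'I_m -> 'I_n * 'I_n) (S : {set 'I_m}) (VH : {set 'I_n}) : {set 'I_n} :=
  [set i in ~: VH | neighb ends S i \subset ~: VH].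

Definition is_subspace (R : pzRingType) (M : lmodType R) (S : set M) : Prop :=
  S 0 /\ forall (a : R) (x y : M), S x -> S y -> S (a *: x + y).

Definition proper_subspace (R : pzRingType) (M : lmodType R) (S : set M) : Prop :=
  is_subspace S /\ exists x, ~ S x.

From HB Require Import structures.
From mathcomp Require Import all_boot all_order all_algebra.
From mathcomp Require Import all_classical all_reals all_analysis.
Import Order.TTheory GRing.Theory Num.Theory.
Local Open Scope ring_scope.
Local Open Scope classical_set_scope.

(* Row i of an admittance matrix is supported on i and its neighbours, and it
   only depends on the edges incident to i.  For i in int(H-bar) no edge of F
   touches i (F lies inside H), so row i is the same for G and G'; and
   theta* agrees with theta' on i and its neighbours (all outside V_H). *)

Lemma mulmx_supp_eq {R : pzRingType} {p q s : nat} (A : 'M[R]_(p, q))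
    (x y : 'M[R]_(q, s)) (i : 'I_p) (k : 'I_s) :
  (forall j, A i j != 0 -> x j k = y j k) -> (A *m x) i k = (A *m y) i k.
Proof.
move=> xy; rewrite !mxE; apply: eq_bigr => j _.
by have [->|/xy ->] := eqVneq (A i j) 0; rewrite ?mul0r.
Qed.

Section Admittance.

Variables (R : fieldType) (n m : nat) (ends : 'I_m -> 'I_n * 'I_n).
Variable r : 'I_m -> R.

Lemma joins_end (e : 'I_m) (u v : 'I_n) :
  joins ends e u v -> (u == (ends e).1) || (u == (ends e).2).
Proof. by case/orP=> /eqP ->; rewrite eqxx ?orbT. Qed.

Lemma offdiag_adm_eq0 (S : {set 'I_m}) (u v : 'I_n) :
  ~~ adj_in ends S u v -> offdiag_adm ends r S u v = 0.
Proof.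
move=> nuv; rewrite /offdiag_adm big1 ?oppr0 // => e /andP [eS euv].
by case/negP: nuv; apply/existsP; exists e; rewrite eS.
Qed.

Lemma admittance_neq0 (S : {set 'I_m}) (u v : 'I_n) :
  admittance ends r S u v != 0 -> v \in u |: neighb ends S u.
Proof.
rewrite mxE !inE eq_sym; have [//|_ /=] := eqVneq u v.
by apply: contraR => /offdiag_adm_eq0 ->.
Qed.

Lemma admittance_row_eq (S T : {set 'I_m}) (u v : 'I_n) :
    (forall e x, joins ends e u x -> (e \in S) = (e \in T)) ->
  admittance ends r S u v = admittance ends r T u v.
Proof.
move=> ST; have offST x : offdiag_adm ends r S u x = offdiag_adm ends r T u x.
  rewrite /offdiag_adm; congr (- _); apply: eq_bigl => e.
  by case euv: (joins ends e u x); rewrite ?andbF // !andbT (ST e x).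
rewrite !mxE; case: eqP => // _.
by congr (- _); apply: eq_bigr => x _.
Qed.

End Admittance.

Lemma int_compl_closed (n m : nat) (ends : 'I_m -> 'I_n * 'I_n)
    (S : {set 'I_m}) (VH : {set 'I_n}) (i : 'I_n) :
  i \in int_compl ends S VH -> i |: neighb ends S i \subset ~: VH.
Proof. by case/setIdP=> iV NV; rewrite finset.subUset finset.sub1set iV. Qed.

Theorem lemma5p1 (R : realType) (n m : nat) (ends : 'I_m -> 'I_n * 'I_n)
  (r : 'I_m -> R) (hr : forall e, 0 < r e)
  (hconn : connected_in ends [set: 'I_m])
  (theta : 'cV[R]_n)
  (VH : {set 'I_n}) (EH F : {set 'I_m})
  (hH : forall e, e \in EH -> ((ends e).1 \in VH) && ((ends e).2 \in VH))
  (hF : F \subset EH)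
  (hconn' : connected_in ends (~: F))
  (theta' : 'cV[R]_n)
  (htheta' : admittance ends r (~: F) *m theta' = admittance ends r [set: 'I_m] *m theta)
  (d : measure_display) (Omega : measurableType d) (P : probability Omega R)
  (z : Omega -> {ffun {v : 'I_n | v \in VH} -> R})
  (hz : forall S : set {ffun {v : 'I_n | v \in VH} -> R},
      proper_subspace S -> P [set w | S (z w)] = 0%E)
  (thstar : Omega -> 'cV[R]_n)
  (hout : forall w v, v \notin VH -> thstar w v 0 = theta' v 0)
  (hin : forall w (v : {v : 'I_n | v \in VH}), thstar w (val v) 0 = theta' (val v) 0 + z w v) :
  forall w, forall i, i \in int_compl ends [set: 'I_m] VH ->
    (admittance ends r [set: 'I_m] *m thstar w) i 0
    = (admittance ends r [set: 'I_m] *m theta) i 0.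
Proof.
move=> w i /int_compl_closed closedV.
have iV : i \notin VH by rewrite -finset.in_setC (fintype.subsetP closedV) ?finset.setU11.
have rowF j : admittance ends r [set: 'I_m] i j = admittance ends r (~: F) i j.
  apply: admittance_row_eq => e x /joins_end iend; rewrite !inE; apply/esym/negP.
  move=> /(fintype.subsetP hF) /hH /andP [e1V e2V].
  by case/orP: iend => /eqP ie; rewrite ie ?e1V ?e2V in iV.
rewrite -htheta'.
rewrite (mulmx_supp_eq _ _ theta') => [|j /admittance_neq0 jN].
  by rewrite !mxE; apply: eq_bigr => j _; rewrite rowF.
by apply: hout; rewrite -finset.in_setC (fintype.subsetP closedV).
Qed.
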